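(* Let $n\ge2$, $\kappa\ge1$, and identify $\mathcal G_{[n;\kappa]}$ with $\mathbb R^{n\kappa^n}$ (standard inner product). Then the subspaces $\mathcal S_{[n;\kappa]}$ and $\mathcal K_{[n;\kappa]}$ are orthogonal, and: (1) if $n>\kappa+1$, then $\mathcal G_{[n;\kappa]}=\mathcal S_{[n;\kappa]}\oplus\mathcal E_{[n;\kappa]}$; (2) if $n\le\kappa+1$, then $\mathcal G_{[n;\kappa]}=\mathcal S_{[n;\kappa]}\oplus\mathcal K_{[n;\kappa]}\oplus\mathcal E_{[n;\kappa]}$, where $\oplus$ denotes a direct sum of mutually orthogonal subspaces.
   Context: A finite game $G\in\mathcal G_{[n;\kappa]}$ has players $\{1,\dots,n\}$, each with strategy set $\{1,\dots,\kappa\}$ (strategy $j$ identified with $\delta_\kappa^j$, the $j$-th column of $I_\kappa$), and payoffs $c_i$; $V_i^c\in\mathbb R^{\kappa^n}$ is the row vector with $c_i(x_1,\dots,x_n)=V_i^c(x_1\otimes\cdots\otimes x_n)$, and the structure vector $V_G=[V_1^c,\dots,V_n^c]$ identifies $\mathcal G_{[n;\kappa]}$ with $\mathbb R^{n\kappa^n}$. $G$ is symmetric if for all $\sigma\in\mathbf S_n$, all $i$ and all profiles, $c_i(x_1,\dots,x_n)=c_{\sigma(i)}(x_{\sigma^{-1}(1)},\dots,x_{\sigma^{-1}(n)})$, and skew-symmetric if $c_i(x_1,\dots,x_n)=\mathrm{sgn}(\sigma)c_{\sigma(i)}(x_{\sigma^{-1}(1)},\dots,x_{\sigma^{-1}(n)})$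 for all such $\sigma,i$ and profiles. $\mathcal S_{[n;\kappa]}$, $\mathcal K_{[n;\kappa]}$ are the subspaces of symmetric and skew-symmetric games, and $\mathcal E_{[n;\kappa]}$ (asymmetric games) is the orthogonal complement of $\mathcal S_{[n;\kappa]}\cup\mathcal K_{[n;\kappa]}$ in $\mathbb R^{n\kappa^n}$. *)

From HB Require Import structures.
From mathcomp Require Import all_boot all_order all_algebra all_fingroup.
Set Implicit Arguments. Unset Strict Implicit. Unset Printing Implicit Defensive.
Import Order.TTheory GRing.Theory Num.Theory.
Local Open Scope ring_scope.

(* Players are 'I_n (player i+1 of the paper is index i), strategies are
   'I_k (strategy j+1 of the paper, i.e. delta_k^{j+1}, is index j).
   A game is the family of payoff functions c_i, i.e. an element of
   {ffun 'I_n -> {ffun profile -> R}}; its entries are exactly the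
   n * k^n coordinates of the structure vector V_G (up to a fixed
   reordering of coordinates), so the identification with R^{n k^n}
   and its standard inner product is the obvious one. *)
Definition profile (n k : nat) := {ffun 'I_n -> 'I_k}.
Definition game (R : ringType) (n k : nat) := {ffun 'I_n -> {ffun profile n k -> R}}.

Definition permute_profile (n k : nat) (s : 'S_n) (x : profile n k) : profile n k :=
  [ffun j => x ((s^-1)%g j)].

Definition gdot (R : ringType) (n k : nat) (c d : game R n k) : R :=
  \sum_(i < n) \sum_(x : profile n k) c i x * d i x.

Definition symmetric_game (R : ringType) (n k : nat) (c : game R n k) : Prop :=
  forall (s : 'S_n) (i : 'I_n) (x : profile n k),
    c i x = c (s i) (permute_profile s x).

Definition skew_symmetric_game (R : ringType) (n k : nat) (c : game R n k) : Prop :=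
  forall (s : 'S_n) (i : 'I_n) (x : profile n k),
    c i x = (-1) ^+ odd_perm s * c (s i) (permute_profile s x).

Definition asymmetric_game (R : ringType) (n k : nat) (c : game R n k) : Prop :=
  forall d : game R n k,
    symmetric_game d \/ skew_symmetric_game d -> gdot c d = 0.

From HB Require Import structures.
From mathcomp Require Import all_boot all_order all_algebra all_fingroup.
From mathcomp Require Import lra.
Set Implicit Arguments. Unset Strict Implicit. Unset Printing Implicit Defensive.
Import Order.TTheory GRing.Theory Num.Theory.
Local Open Scope ring_scope.

(* Averaging a game over S_n, with or without the sign character, gives
   orthogonal projections onto the symmetric and the skew-symmetric games:
   the averages have the right invariance, and against an invariant game
   they have the same inner product as the original game, because the
   inner product is invariant under the action of S_n.  Hence
   c - (symmetric average) - (skew average) is orthogonal to S and K, and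
   the decomposition is unique because the inner product is positive
   definite.  A transposition swapping two players shows that S and K are
   orthogonal.  When n > k + 1, any profile has two players other than i
   choosing the same strategy; the transposition of these two fixes i and
   the profile, so every skew-symmetric game vanishes. *)

Section Action.
Variables (R : comNzRingType) (n k : nat).
Local Notation game := (game R n k).
Local Notation profile := (profile n k).
Local Notation pp := (@permute_profile n k).

Lemma permute_profileM (s t : 'S_n) (x : profile) : pp t (pp s x) = pp (s * t)%g x.
Proof. by apply/ffunP => j; rewrite !ffunE invMg permM. Qed.

Lemma permute_profile_inj (s : 'S_n) : injective (pp s).
Proof.
move=> x y /(congr1 (fun z : profile => z (s _))) exy; apply/ffunP => j.
by have := exy j; rewrite !ffunE permK.
Qed.

Lemma sum_game_permute (F : 'I_n -> profile -> R) (s : 'S_n) :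
  \sum_i \sum_x F (s i) (pp s x) = \sum_i \sum_x F i x.
Proof.
rewrite [RHS](reindex_inj (@perm_inj _ s)); apply: eq_bigr => i _.
by rewrite [RHS](reindex_inj (@permute_profile_inj s)).
Qed.

Lemma gdot_permute (c d : game) (s : 'S_n) :
  gdot c d = \sum_i \sum_x c (s i) (pp s x) * d (s i) (pp s x).
Proof. by rewrite (sum_game_permute (fun i x => c i x * d i x)). Qed.

Lemma gdotC (c d : game) : gdot c d = gdot d c.
Proof. by apply: eq_bigr => i _; apply: eq_bigr => x _; rewrite mulrC. Qed.

Lemma gdot0l (d : game) : gdot 0 d = 0.
Proof.
by rewrite /gdot big1 // => i _; rewrite big1 // => x _; rewrite !ffunE mul0r.
Qed.

Lemma gdotDl (c c' d : game) : gdot (c + c') d = gdot c d + gdot c' d.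
Proof.
rewrite -big_split; apply: eq_bigr => i _.
by rewrite -big_split; apply: eq_bigr => x _; rewrite !ffunE mulrDl.
Qed.

Lemma gdotNl (c d : game) : gdot (- c) d = - gdot c d.
Proof.
rewrite -sumrN; apply: eq_bigr => i _.
by rewrite -sumrN; apply: eq_bigr => x _; rewrite !ffunE mulNr.
Qed.

Lemma gdotBl (c c' d : game) : gdot (c - c') d = gdot c d - gdot c' d.
Proof. by rewrite gdotDl gdotNl. Qed.

(* [perm_sign false] is the trivial character and [perm_sign true] the
   signature, so that symmetry and skew-symmetry are treated at once. *)
Definition perm_sign (b : bool) (s : 'S_n) : R := (-1) ^+ (b && odd_perm s).

Definition sign_invariant (b : bool) (c : game) : Prop :=
  forall s i x, c i x = perm_sign b s * c (s i) (pp s x).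

Lemma perm_signM b (s t : 'S_n) :
  perm_sign b (s * t)%g = perm_sign b s * perm_sign b t.
Proof. by rewrite /perm_sign odd_permM -signr_addb; case: b. Qed.

Lemma sign_invariant_sym (c : game) : sign_invariant false c <-> symmetric_game c.
Proof. by split => Hc s i x; rewrite (Hc s) /perm_sign /= expr0 mul1r. Qed.

Lemma symmetric_gameB (c d : game) :
  symmetric_game c -> symmetric_game d -> symmetric_game (c - d).
Proof. by move=> Hc Hd s i x; rewrite !ffunE (Hc s) (Hd s). Qed.

Lemma skew_symmetric_gameB (c d : game) :
  skew_symmetric_game c -> skew_symmetric_game d -> skew_symmetric_game (c - d).
Proof. by move=> Hc Hd s i x; rewrite !ffunE (Hc s) (Hd s) mulrBr. Qed.

Lemma asymmetric_gameB (c d : game) :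
  asymmetric_game c -> asymmetric_game d -> asymmetric_game (c - d).
Proof. by move=> Hc Hd e He; rewrite gdotBl Hc // Hd // subr0. Qed.

End Action.

Section Average.
Variables (R : numFieldType) (n k : nat).
Local Notation game := (game R n k).
Local Notation profile := (profile n k).
Local Notation pp := (@permute_profile n k).
Local Notation perm_sign := (@perm_sign R n).

Definition average (b : bool) (c : game) : game :=
  [ffun i => [ffun x => n`!%:R^-1 * \sum_(s : 'S_n) perm_sign b s * c (s i) (pp s x)]].

Lemma average_sign_invariant b c : sign_invariant b (average b c).
Proof.
move=> t i x; rewrite !ffunE mulrCA; congr (_ * _).
rewrite (reindex_inj (mulgI t)) mulr_sumr; apply: eq_bigr => s _.
by rewrite permute_profileM permM perm_signM mulrA.
Qed.

Lemma gdot_average b (c d : game) :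
  sign_invariant b d -> gdot (average b c) d = gdot c d.
Proof.
move=> Hd; transitivity (\sum_i \sum_x n`!%:R^-1 *
    \sum_(s : 'S_n) c (s i) (pp s x) * d (s i) (pp s x)).
  apply: eq_bigr => i _; apply: eq_bigr => x _.
  rewrite !ffunE -mulrA mulr_suml; congr (_ * _); apply: eq_bigr => s _.
  by rewrite (Hd s) mulrACA -expr2 sqrr_sign mul1r.
under eq_bigr do rewrite -big_distrr /= exchange_big /=.
rewrite -big_distrr /= exchange_big /=.
under eq_bigr do rewrite -gdot_permute.
rewrite sumr_const card_Sn -[gdot c d *+ _]mulr_natl mulKf //.
by rewrite pnatr_eq0 -lt0n fact_gt0.
Qed.

Lemma gdot_sym_skew (c d : game) : (1 < n)%N ->
  symmetric_game c -> skew_symmetric_game d -> gdot c d = 0.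
Proof.
move=> n_gt1 Hc Hd; pose tau := tperm (Ordinal (ltnW n_gt1)) (Ordinal n_gt1).
have odd_tau : odd_perm tau by rewrite odd_tperm.
have : gdot c d = - gdot c d.
  rewrite {1}(gdot_permute _ _ tau) -!sumrN; apply: eq_bigr => i _.
  rewrite -sumrN; apply: eq_bigr => x _.
  by rewrite -(Hc tau) (Hd tau) odd_tau mulN1r mulrN opprK.
by move/eqP; rewrite eq_sym eqNr => /eqP.
Qed.

Lemma asymmetric_average_remainder (c : game) : (1 < n)%N ->
  asymmetric_game (c - average false c - average true c).
Proof.
move=> n_gt1 d [Hd|Hd]; rewrite !gdotBl.
  have skew_avg : skew_symmetric_game (average true c).
    exact: average_sign_invariant.
  have /sign_invariant_sym Hd' := Hd.
  by rewrite (gdot_average c Hd') (gdotC (average true c))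
    (gdot_sym_skew n_gt1 Hd skew_avg) subrr subr0.
have sym_avg : symmetric_game (average false c).
  exact/sign_invariant_sym/average_sign_invariant.
rewrite (gdot_average c (Hd : sign_invariant true d)).
by rewrite (gdot_sym_skew n_gt1 sym_avg Hd) subr0 subrr.
Qed.

Lemma skew_symmetric_game_eq0_at (t : game) i (x : profile) j l :
  skew_symmetric_game t -> j != l -> j != i -> l != i -> x j = x l -> t i x = 0.
Proof.
move=> Ht jl ji li xjl; pose tau := tperm j l.
have tau_i : tau i = i by rewrite tpermD.
have tau_x : pp tau x = x.
  by apply/ffunP => m; rewrite ffunE tpermV; case: tpermP => // ->.
have := Ht tau i x; rewrite tau_i tau_x odd_tperm jl mulN1r.
by move/eqP; rewrite eq_sym eqNr => /eqP.
Qed.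

Lemma skew_symmetric_game_eq0 (t : game) :
  (k.+1 < n)%N -> skew_symmetric_game t -> t = 0.
Proof.
move=> k_lt Ht; apply/ffunP => i; apply/ffunP => x; rewrite !ffunE.
have n_gt0 : (0 < n)%N by apply: leq_trans k_lt.
have /dinjectivePn [j ji [l /andP [lj li] xjl]] : ~~ dinjectiveb x (mem [set~ i]).
  apply: contraTN k_lt => /dinjectiveP/leq_card_in.
  by rewrite cardsC1 !card_ord -ltnS prednK // leqNgt.
rewrite !inE in ji li.
by apply: (skew_symmetric_game_eq0_at Ht _ ji li xjl); rewrite eq_sym.
Qed.

End Average.

Section Decomposition.
Variables (R : realFieldType) (n k : nat).
Local Notation game := (game R n k).
Local Notation profile := (profile n k).

Lemma gdot_self_eq0 (c : game) : gdot c c = 0 -> c = 0.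
Proof.
rewrite /gdot pair_bigA /= => gdot0.
have sqr_ge0 (p : 'I_n * profile) : true -> 0 <= c p.1 p.2 * c p.1 p.2.
  by rewrite -expr2 sqr_ge0.
apply/ffunP => i; apply/ffunP => x; apply/eqP.
by rewrite !ffunE -sqrf_eq0 expr2 (psumr_eq0P sqr_ge0 gdot0 (i := (i, x))).
Qed.

Lemma sym_skew_asym_eq0 (a b e : game) : (1 < n)%N ->
  symmetric_game a -> skew_symmetric_game b -> asymmetric_game e ->
  a + b + e = 0 -> [/\ a = 0, b = 0 & e = 0].
Proof.
move=> n_gt1 Ha Hb He abe0.
have e0 : e = 0.
  have e_opp : e = - (a + b) by apply/eqP; rewrite -addr_eq0 addrC abe0.
  apply: gdot_self_eq0; rewrite {1}e_opp gdotNl gdotDl !(gdotC _ e).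
  by rewrite (He a (or_introl Ha)) (He b (or_intror Hb)) addr0 oppr0.
move: abe0; rewrite e0 addr0 => ab0.
have a0 : a = 0.
  apply: gdot_self_eq0; have : gdot (a + b) a = 0 by rewrite ab0 gdot0l.
  by rewrite gdotDl (gdotC b) (gdot_sym_skew n_gt1 Ha Hb) addr0.
by split=> //; move: ab0; rewrite a0 add0r.
Qed.

Lemma sym_skew_asym_decomposition (c : game) : (1 < n)%N ->
  exists! p : game * game * game,
    [/\ symmetric_game p.1.1, skew_symmetric_game p.1.2,
        asymmetric_game p.2 & c = p.1.1 + p.1.2 + p.2].
Proof.
move=> n_gt1; pose a := average false c; pose b := average true c.
have Ha : symmetric_game a by exact/sign_invariant_sym/average_sign_invariant.
have Hb : skew_symmetric_game b by exact: average_sign_invariant.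
have He : asymmetric_game (c - a - b) by exact: asymmetric_average_remainder.
exists (a, b, c - a - b); split=> [|[[a' b'] e'] /= [Ha' Hb' He' c_eq]].
  by split=> //; rewrite -[c - a - b]addrA -opprD subrKC.
have [] := sym_skew_asym_eq0 n_gt1 (symmetric_gameB Ha Ha')
  (skew_symmetric_gameB Hb Hb') (asymmetric_gameB He He').
  apply/ffunP => i; apply/ffunP => x; move/(congr1 (fun g : game => g i x)): c_eq.
  rewrite !ffunE => c_eq; lra.
by move=> /subr0_eq <- /subr0_eq <- /subr0_eq <-.
Qed.

Lemma sym_asym_decomposition (c : game) : (k.+1 < n)%N ->
  exists! p : game * game,
    [/\ symmetric_game p.1, asymmetric_game p.2 & c = p.1 + p.2].
Proof.
move=> k_lt; have n_gt1 : (1 < n)%N by apply: leq_trans k_lt.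
have [[[a b] e] [[/= Ha Hb He c_eq] uniq3]] := sym_skew_asym_decomposition c n_gt1.
have b0 := skew_symmetric_game_eq0 k_lt Hb.
exists (a, e); split=> [|[a' e'] /= [Ha' He' c_eq']].
  by split=> //; rewrite c_eq b0 addr0.
have skew0 : skew_symmetric_game (0 : game).
  by move=> s i x; rewrite !ffunE mulr0.
have [-> _ ->] : (a, b, e) = (a', 0, e').
  by apply: uniq3; split; rewrite //= addr0.
by [].
Qed.

End Decomposition.

Theorem proposition5p8 (R : realFieldType) (n k : nat) :
  (2 <= n)%N -> (1 <= k)%N ->
  (forall s t : game R n k,
      symmetric_game s -> skew_symmetric_game t -> gdot s t = 0) /\
  ((k.+1 < n)%N ->
     forall c : game R n k,
       exists! p : game R n k * game R n k,
         [/\ symmetric_game p.1, asymmetric_game p.2 & c = p.1 + p.2]) /\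
  ((n <= k.+1)%N ->
     forall c : game R n k,
       exists! p : game R n k * game R n k * game R n k,
         [/\ symmetric_game p.1.1, skew_symmetric_game p.1.2,
             asymmetric_game p.2 & c = p.1.1 + p.1.2 + p.2]).
Proof.
move=> n_gt1 _; split; first by move=> s t; exact: gdot_sym_skew.
split=> [k_lt|_] c; first exact: sym_asym_decomposition.
exact: sym_skew_asym_decomposition.
Qed.
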